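(* Let $S$ be a group and $G,H$ subgroups of $S$ such that the cyclic $S$-acts $\overline{G}=S/G$ and $\overline{H}=S/H$ are geometrically equivalent. Then there exist $\alpha,\beta\in S$ such that $\alpha^{-1}G\alpha\subseteq H$ and $\beta^{-1}H\beta\subseteq G$.
   Context: A left $S$-act is a nonempty set with an action $S\times A\to A$ satisfying $1a=a$, $(st)a=s(ta)$; homomorphisms preserve the action. For a nonempty finite set $X$, $F_X=\coprod_{x\in X}S_x$ is the free $S$-act on $X$. For an $S$-act $G'$ and a relation $T\subseteq F_X\times F_X$, $T'_{G'}=\{\mu:F_X\to G' \text{ homomorphism}: T\subseteq\ker\mu\}$ and $T''_{G'}=\bigcap_{\mu\in T'_{G'}}\ker\mu$ (empty intersection $=F_X\times F_X$). $S$-acts $G_1,G_2$ are geometrically equivalent iff $T''_{G_1}=T''_{G_2}$ for all nonempty finite $X$ and all $T\subseteq F_X\times F_X$. For a subgroup $K$ of $S$, $\overline{K}=S/K$ is the $S$-act of left cosets with $s\cdot tK=stK$. *)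

From Stdlib Require Import List FunctionalExtensionality ProofIrrelevance.

Record Group := {
  gcar :> Type;
  gmul : gcar -> gcar -> gcar;
  gone : gcar;
  ginv : gcar -> gcar;
  gmulA : forall x y z, gmul x (gmul y z) = gmul (gmul x y) z;
  gmul1 : forall x, gmul gone x = x;
  gmulg1 : forall x, gmul x gone = x;
  gmulV : forall x, gmul (ginv x) x = gone;
  gmulgV : forall x, gmul x (ginv x) = gone }.
Arguments gmul {g}. Arguments gone {g}. Arguments ginv {g}.

Definition subgroup {S : Group} (K : S -> Prop) : Prop :=
  K gone /\ (forall x y, K x -> K y -> K (gmul x y)) /\ (forall x, K x -> K (ginv x)).

Record Act (S : Group) := {
  acar :> Type;
  aop : S -> acar -> acar;
  aop1 : forall a, aop gone a = a;
  aopM : forall s t a, aop (gmul s t) a = aop s (aop t a);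
  ainh : inhabited acar }.
Arguments aop {S a0} _ _ : rename.

Definition is_hom {S : Group} {A B : Act S} (f : A -> B) : Prop :=
  forall s a, f (aop s a) = aop s (f a).

(* Free S-act F_X = coprod_{x in X} S_x, represented as X * S with t.(x,s) = (x,ts). *)
Definition free_op {S : Group} (X : Type) (t : S) (p : X * S) : X * S :=
  (fst p, gmul t (snd p)).

Lemma free_op1 (S : Group) (X : Type) (p : X * S) : @free_op S X (@gone S) p = p.
Proof. destruct p; unfold free_op; simpl; rewrite gmul1; reflexivity. Qed.

Lemma free_opM (S : Group) (X : Type) s t (p : X * S) :
  @free_op S X (gmul s t) p = @free_op S X s (@free_op S X t p).
Proof. destruct p; unfold free_op; simpl; rewrite gmulA; reflexivity. Qed.

Definition free_act (S : Group) {X : Type} (HX : inhabited X) : Act S.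
Proof.
  refine {| acar := X * S; aop := @free_op S X;
            aop1 := @free_op1 S X; aopM := @free_opM S X |}.
  destruct HX as [x]; exact (inhabits (x, gone)).
Defined.

(* T''_{G'} = intersection of kernels of all homs F_X -> G' whose kernel contains T. *)
Definition Tpp {S : Group} {X : Type} (HX : inhabited X) (B : Act S)
    (T : X * S -> X * S -> Prop) (p q : X * S) : Prop :=
  forall mu : free_act S HX -> B, is_hom mu ->
    (forall a b, T a b -> mu a = mu b) -> mu p = mu q.

Definition finite_type (X : Type) : Prop := exists l : list X, forall x, In x l.

Definition geom_equiv {S : Group} (A B : Act S) : Prop :=
  forall (X : Type) (HX : inhabited X), finite_type X ->
  forall (T : X * S -> X * S -> Prop) (p q : X * S),
    Tpp HX A T p q <-> Tpp HX B T p q.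

(* Coset act S/K: left cosets tK = {u | t^{-1} u in K}, with s.(tK) = (st)K. *)
Definition coset {S : Group} (K : S -> Prop) : Type :=
  { C : S -> Prop | exists t : S, C = fun u => K (gmul (ginv t) u) }.

Lemma ginv_mul {S : Group} (s t : S) : ginv (gmul s t) = gmul (ginv t) (ginv s).
Proof.
  assert (e : gmul (gmul s t) (gmul (ginv t) (ginv s)) = gone).
  { rewrite <- gmulA, (gmulA S t), gmulgV, gmul1, gmulgV. reflexivity. }
  transitivity (gmul (ginv (gmul s t)) gone); [rewrite gmulg1; reflexivity|].
  rewrite <- e, gmulA, gmulV, gmul1. reflexivity.
Qed.

Lemma ginv1 (S : Group) : ginv (@gone S) = gone.
Proof. rewrite <- (gmul1 S (ginv gone)), gmulgV. reflexivity. Qed.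

Lemma coset_eq (S : Group) (K : S -> Prop) (C D : coset K) :
  proj1_sig C = proj1_sig D -> C = D.
Proof.
  destruct C as [C hC], D as [D hD]; simpl; intros e; subst D.
  f_equal; apply proof_irrelevance.
Qed.

Definition coset_op {S : Group} {K : S -> Prop} (s : S) (C : coset K) : coset K.
Proof.
  refine (exist _ (fun u => proj1_sig C (gmul (ginv s) u)) _).
  destruct C as [C [t ht]]; simpl. exists (gmul s t). subst C.
  apply functional_extensionality; intro u.
  rewrite ginv_mul, gmulA. reflexivity.
Defined.

Lemma coset_op1 (S : Group) (K : S -> Prop) (C : coset K) : coset_op gone C = C.
Proof.
  apply coset_eq; simpl. apply functional_extensionality; intro u.
  rewrite ginv1, gmul1. reflexivity.
Qed.

Lemma coset_opM (S : Group) (K : S -> Prop) s t (C : coset K) :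
  coset_op (gmul s t) C = coset_op s (coset_op t C).
Proof.
  apply coset_eq; simpl. apply functional_extensionality; intro u.
  rewrite ginv_mul, gmulA. reflexivity.
Qed.

Definition coset_base {S : Group} (K : S -> Prop) : coset K.
Proof.
  refine (exist _ K _). exists gone.
  apply functional_extensionality; intro u. rewrite ginv1, gmul1. reflexivity.
Defined.

Definition coset_act {S : Group} (K : S -> Prop) : Act S :=
  {| acar := coset K; aop := @coset_op S K; aop1 := @coset_op1 S K;
     aopM := @coset_opM S K; ainh := inhabits (coset_base K) |}.

(* Take X a singleton and T = {(g, 1) | g in G}. The projection s |-> sG is a
   homomorphism F_X -> S/G killing T. If some homomorphism mu : F_X -> S/H kills T
   as well, then g fixes the coset mu(1) = cH for every g in G, i.e.
   c^-1 G c is contained in H. Otherwise T''_{S/H} is everything, hence so is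
   T''_{S/G}; applied to the projection this forces G = S. Then S/G is a point,
   so T''_{S/G} of the empty relation is everything, hence so is T''_{S/H}, and
   H = S; any alpha works. *)
From Stdlib Require Import List FunctionalExtensionality Classical PropExtensionality.

Section CosetAct.

Variable S : Group.

Definition coset_proj {X : Type} (K : S -> Prop) (p : X * S) : coset K :=
  coset_op (snd p) (coset_base K).

Lemma coset_proj_hom (X : Type) (HX : inhabited X) (K : S -> Prop) :
  @is_hom S (free_act S HX) (coset_act K) (coset_proj K).
Proof. intros s [x t]; apply coset_opM. Qed.

Lemma coset_base_fixed (K : S -> Prop) (g : S) :
  subgroup K -> K g -> coset_op g (coset_base K) = coset_base K.
Proof.
  intros [_ [KM KV]] Kg; apply coset_eq; simpl.
  apply functional_extensionality; intro u; apply propositional_extensionality.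
  split; intro Ku.
  - replace u with (gmul g (gmul (ginv g) u)) by
      (rewrite gmulA, gmulgV, gmul1; reflexivity).
    now apply KM.
  - now apply KM; [apply KV|].
Qed.

Lemma coset_base_stab (K : S -> Prop) (s : S) :
  K gone -> coset_op s (coset_base K) = coset_base K -> K s.
Proof.
  intros K1 e; apply (f_equal (fun C => proj1_sig C s)) in e; simpl in e.
  rewrite gmulV in e; now rewrite <- e.
Qed.

Lemma coset_stab_conj (K : S -> Prop) (C : coset K) :
  K gone -> exists c, forall g,
    coset_op g C = C -> K (gmul (gmul (ginv c) g) c).
Proof.
  intros K1; destruct C as [C [c ->]]; exists c; intros g e.
  apply (f_equal (fun C => proj1_sig C (gmul g c))) in e; simpl in e.
  rewrite (gmulA S (ginv g)), gmulV, gmul1, gmulV in e.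
  rewrite <- gmulA, <- e; exact K1.
Qed.

Lemma coset_act_trivial (K : S -> Prop) :
  (forall x, K x) -> forall C D : coset K, C = D.
Proof.
  intros Kall [C [c ->]] [D [d ->]]; apply coset_eq; simpl.
  apply functional_extensionality; intro u; apply propositional_extensionality.
  split; intros; apply Kall.
Qed.

Lemma Tpp_vacuous (X : Type) (HX : inhabited X) (B : Act S)
    (T : X * S -> X * S -> Prop) (p q : X * S) :
  ~ (exists mu : free_act S HX -> B,
       is_hom mu /\ forall a b, T a b -> mu a = mu b) ->
  Tpp HX B T p q.
Proof. intros none mu hom kill; exfalso; eauto. Qed.

Lemma Tpp_coset_full (K : S -> Prop) (T : unit * S -> unit * S -> Prop) :
  K gone ->
  (forall a b, T a b -> coset_proj K a = coset_proj K b) ->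
  (forall s, Tpp (inhabits tt) (coset_act K) T (tt, gone) (tt, s)) ->
  forall s, K s.
Proof.
  intros K1 kill full s.
  pose proof (full s (coset_proj K) (coset_proj_hom _ _ K) kill) as e.
  unfold coset_proj in e; simpl in e; rewrite coset_op1 in e.
  now apply coset_base_stab; [|symmetry].
Qed.

Definition stab_rel (K : S -> Prop) (a b : unit * S) : Prop :=
  exists g, K g /\ a = (tt, g) /\ b = (tt, gone).

Lemma hom_kill_stab_rel_conj (G H : S -> Prop)
    (mu : free_act S (inhabits tt) -> coset_act H) :
  H gone -> is_hom mu -> (forall a b, stab_rel G a b -> mu a = mu b) ->
  exists alpha, forall g, G g -> H (gmul (gmul (ginv alpha) g) alpha).
Proof.
  intros H1 hom kill.
  destruct (coset_stab_conj H (mu (tt, gone)) H1) as [c stab].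
  exists c; intros g Gg; apply stab.
  transitivity (mu (tt, g)).
  - rewrite <- (gmulg1 S g) at 2; symmetry; exact (hom g (tt, gone)).
  - apply kill; exists g; auto.
Qed.

Lemma finite_type_unit : finite_type unit.
Proof. exists (tt :: nil); intros []; simpl; auto. Qed.

Lemma geom_equiv_sym (A B : Act S) : geom_equiv A B -> geom_equiv B A.
Proof. intros E X HX fin T p q; symmetry; now apply E. Qed.

Lemma geom_equiv_coset_conj (G H : S -> Prop) :
  subgroup G -> subgroup H ->
  geom_equiv (coset_act G) (coset_act H) ->
  exists alpha, forall g, G g -> H (gmul (gmul (ginv alpha) g) alpha).
Proof.
  intros sG sH E.
  pose proof (E unit (inhabits tt) finite_type_unit) as E1.
  destruct (classic (exists mu : free_act S (inhabits tt) -> coset_act H,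
      is_hom mu /\ forall a b, stab_rel G a b -> mu a = mu b))
    as [[mu [hom kill]] | none].
  - exact (hom_kill_stab_rel_conj G H mu (proj1 sH) hom kill).
  - assert (Gall : forall s, G s).
    { apply (Tpp_coset_full G (stab_rel G) (proj1 sG)).
      - intros a b [g [Gg [-> ->]]]; unfold coset_proj; simpl.
        rewrite coset_op1; now apply coset_base_fixed.
      - intro s; apply E1, Tpp_vacuous, none. }
    assert (Hall : forall s, H s).
    { apply (Tpp_coset_full H (fun _ _ => False) (proj1 sH)); [tauto|].
      intro s; apply E1; intros mu _ _; now apply coset_act_trivial. }
    exists gone; auto.
Qed.

End CosetAct.

Theorem proposition3p9 (S : Group) (G H : S -> Prop) :
  subgroup G -> subgroup H ->
  geom_equiv (coset_act G) (coset_act H) ->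
  exists alpha beta : S,
    (forall g, G g -> H (gmul (gmul (ginv alpha) g) alpha)) /\
    (forall h, H h -> G (gmul (gmul (ginv beta) h) beta)).
Proof.
  intros sG sH E.
  destruct (geom_equiv_coset_conj S G H sG sH E) as [alpha Halpha].
  destruct (geom_equiv_coset_conj S H G sH sG (geom_equiv_sym S _ _ E))
    as [beta Hbeta].
  now exists alpha, beta.
Qed.
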